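(* Let $n\ge 2$ and $\alpha\in[0,1]$. If $T$ is a tree of order $n$, then \[ \rho(A_\alpha(T))\le\frac{\alpha n+\sqrt{\alpha^2n^2+4(n-1)(1-2\alpha)}}{2}, \] with equality if and only if $T$ is the star $K_{1,n-1}$.
   Context: For a graph $G$ let $A(G)$ be its adjacency matrix and $D(G)$ the diagonal matrix of its vertex degrees. For $\alpha\in[0,1]$ define $A_\alpha(G)=\alpha D(G)+(1-\alpha)A(G)$. $\rho(M)$ denotes the spectral radius (largest eigenvalue) of a real symmetric nonnegative matrix $M$. *)

(* Real numbers: an arbitrary real closed field R. *)
From HB Require Import structures.
From mathcomp Require Import all_boot all_order all_algebra.
Set Implicit Arguments. Unset Strict Implicit. Unset Printing Implicit Defensive.
Import Order.TTheory GRing.Theory Num.Theory.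
Local Open Scope ring_scope.

Definition simple_graph (n : nat) (e : rel 'I_n) : Prop :=
  irreflexive e /\ symmetric e.

Definition connected_graph (n : nat) (e : rel 'I_n) : Prop :=
  forall x y : 'I_n, connect e x y.

Definition acyclic_graph (n : nat) (e : rel 'I_n) : Prop :=
  ~ (exists s : seq 'I_n, [/\ (3 <= size s)%N, uniq s & cycle e s]).

Definition is_tree (n : nat) (e : rel 'I_n) : Prop :=
  [/\ simple_graph e, connected_graph e & acyclic_graph e].

Definition is_star (n : nat) (e : rel 'I_n) : Prop :=
  exists c : 'I_n, forall i j : 'I_n, e i j = (i != j) && ((i == c) || (j == c)).

Definition vdeg (n : nat) (e : rel 'I_n) (i : 'I_n) : nat := #|[set j | e i j]|.

Definition adj_mx (R : nzRingType) (n : nat) (e : rel 'I_n) : 'M[R]_n :=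
  \matrix_(i, j) (e i j)%:R.

Definition deg_mx (R : nzRingType) (n : nat) (e : rel 'I_n) : 'M[R]_n :=
  \matrix_(i, j) ((i == j)%:R * (vdeg e i)%:R).

Definition A_alpha (R : nzRingType) (n : nat) (e : rel 'I_n) (alpha : R) : 'M[R]_n :=
  alpha *: deg_mx R e + (1 - alpha) *: adj_mx R e.

Definition is_spectral_radius (R : realFieldType) (n : nat) (M : 'M[R]_n) (r : R) : Prop :=
  eigenvalue M r /\ forall l : R, eigenvalue M l -> l <= r.

From HB Require Import structures.
From mathcomp Require Import all_boot all_order all_algebra.
From mathcomp Require Import zify ring lra.
Set Implicit Arguments. Unset Strict Implicit. Unset Printing Implicit Defensive.
Import Order.TTheory GRing.Theory Num.Theory.

(* For alpha < 1 let b be the larger root of b^2 - alpha n b + (n-1)(2 alpha - 1),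
   t = (b - 1) / (n - 2), and y_i = 1 - alpha + t (d_i - 1), a positive vector which
   is the Perron vector of the star (1 - alpha on the leaves, b - alpha at the centre).
   On a tree the degrees of the neighbours of a vertex add up to at most n - 1, and
   (y A_alpha)_u - b y_u splits into two nonpositive terms; so y A_alpha <= b y and the
   Collatz-Wielandt argument bounds every eigenvalue by b. If b is an eigenvalue,
   connectedness forces y A_alpha = b y; at a leaf this says that its neighbour has
   degree n - 1, i.e. the tree is a star. For alpha = 1, A_alpha is the degree matrix
   and b = n - 1. *)

Lemma uniq_size_le_card (T : finType) (s : seq T) : uniq s -> (size s <= #|T|)%N.
Proof. by move/card_uniqP <-; apply: max_card. Qed.

Section Tree.
Variables (n : nat) (e : rel 'I_n).
Hypotheses (e_irr : irreflexive e) (e_sym : symmetric e).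

Lemma edge_neq i j : e i j -> i != j.
Proof. by apply: contraTneq => ->; rewrite e_irr. Qed.

Lemma vdeg_le_pred i : (vdeg e i <= n.-1)%N.
Proof.
have := cardsC1 i; rewrite card_ord => <-; apply: subset_leq_card.
by apply/subsetP => j; rewrite !inE eq_sym => /edge_neq.
Qed.

Hypothesis e_acyclic : acyclic_graph e.

Lemma acyclic_no_triangle a b c : e a b -> e b c -> e c a -> False.
Proof.
move=> ab bc ca; apply: e_acyclic; exists [:: a; b; c].
by rewrite /= !inE negb_or (edge_neq ab) (edge_neq bc) eq_sym (edge_neq ca) ab bc ca.
Qed.

Lemma acyclic_no_square a b c d :
  e a b -> e b c -> e c d -> e d a -> a != c -> b != d -> False.
Proof.
move=> ab bc cd da ac bd; apply: e_acyclic; exists [:: a; b; c; d].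
rewrite /= !inE !negb_or ac bd (edge_neq ab) (edge_neq bc) (edge_neq cd).
by rewrite eq_sym (edge_neq da) ab bc cd da.
Qed.

(* The walks [u - w - z] inject into the vertices other than [u]: map one to
   [z], or to [w] when [z = u]; injectivity is the absence of 3- and 4-cycles. *)
Lemma sum_vdeg_neighbours_le u : (\sum_(w | e u w) vdeg e w <= n.-1)%N.
Proof.
have -> : (\sum_(w | e u w) vdeg e w = #|[set p | e u p.1 && e p.1 p.2]|)%N.
  rewrite -sum1_card (eq_bigr (fun w => \sum_(z | e w z) 1)%N); last first.
    by move=> w _; rewrite /vdeg -sum1_card; apply: eq_bigl => z; rewrite inE.
  by rewrite pair_big_dep; apply: eq_bigl => p; rewrite inE.
pose f (p : 'I_n * 'I_n) := if p.2 == u then p.1 else p.2.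
rewrite -(card_in_imset (f := f)); last first.
  move=> [w z] [w' z']; rewrite !inE /f /= => /andP [uw wz] /andP [uw' wz'].
  case: eqP => [zu|zu]; case: eqP => [z'u|z'u] E.
  - by rewrite E zu z'u.
  - by case: (acyclic_no_triangle uw' wz'); rewrite e_sym -E.
  - by case: (acyclic_no_triangle uw wz); rewrite e_sym E.
  - have [<-|ww'] := eqVneq w w'; first by rewrite E.
    case: (acyclic_no_square uw wz _ _ _ ww'); rewrite 1?e_sym ?E //.
    by rewrite eq_sym; apply/eqP; rewrite -E.
have := cardsC1 u; rewrite card_ord => <-; apply: subset_leq_card.
apply/subsetP => x /imsetP [[w z]]; rewrite !inE /f /= => /andP [uw wz] ->.
by have [_|//] := eqVneq z u; rewrite eq_sym (edge_neq uw).
Qed.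

Lemma is_star_of_vdeg w : vdeg e w = n.-1 -> is_star e.
Proof.
move=> dw; have ew i : e w i = (i != w).
  have : [set j | e w j] =i [set~ w].
    apply/subset_cardP; first by rewrite cardsC1 card_ord.
    by apply/subsetP => j; rewrite !inE eq_sym => /edge_neq.
  by move/(_ i); rewrite !inE.
exists w => i j.
have [->|iw] := eqVneq i w; first by rewrite ew /= andbT eq_sym.
have [->|jw] := eqVneq j w; first by rewrite e_sym ew /= andbT.
rewrite /= andbF; apply/negP => eij.
by apply: (acyclic_no_triangle (c := w) eij); rewrite ?ew // e_sym ew.
Qed.

Lemma path_end_leaf_or_extends x a p : e x a -> path e a p -> uniq [:: x, a & p] ->
  (forall y, e x y -> y = a) \/ exists2 y, e y x & y \notin [:: x, a & p].
Proof.
move=> xa ap uxap.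
have [y /andP [xy ya] | noy] := pickP [pred y | e x y && (y != a)]; last first.
  by left => y xy; apply/eqP; move: (noy y) => /= /negbT; rewrite xy negbK.
right; exists y; first by rewrite e_sym.
rewrite !inE (negbTE ya) eq_sym (negbTE (edge_neq xy)) /=; apply/negP => /splitPr ypp.
case: ypp ap uxap => p1 p2 ap uxap; apply: e_acyclic.
exists [:: x, a & rcons p1 y]; split.
- by rewrite /= size_rcons.
- by move: uxap; rewrite -cat_rcons -!cat_cons cat_uniq => /andP [].
- rewrite /cycle rcons_path /= last_rcons (e_sym y) xy xa andbT.
  by move: ap; rewrite -cat_rcons cat_path => /andP [].
Qed.

Hypotheses (e_conn : connected_graph e) (n_ge2 : (2 <= n)%N).

Lemma exists_neighbour i : exists a, e i a.
Proof.
have /card_gt0P [j] : (0 < #|[set~ i]|)%N by rewrite cardsC1 card_ord; lia.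
rewrite !inE => ji.
case/connectP: (e_conn i j) => [[|a p]] /= => [_ ij|/andP [ia _] _]; last by exists a.
by rewrite ij eqxx in ji.
Qed.

Lemma vdeg_gt0 i : (0 < vdeg e i)%N.
Proof. by have [a ia] := exists_neighbour i; apply/card_gt0P; exists a; rewrite inE. Qed.

(* Extend a path at its head until it cannot be extended: its head is a leaf. *)
Lemma exists_leaf : exists l w, e l w /\ forall y, e l y -> y = w.
Proof.
have n_gt0 : (0 < n)%N by lia.
have [a xa] := exists_neighbour (Ordinal n_gt0).
suff leaf_from m x b p : (n - size p <= m)%N -> e x b -> path e b p ->
    uniq [:: x, b & p] -> exists l w, e l w /\ forall y, e l y -> y = w.
  by apply: (leaf_from n (Ordinal n_gt0) a [::]); rewrite ?subn0 //= mem_seq1 andbT edge_neq.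
elim: m x b p => [|m IH] x b p Hm xb bp uxbp.
  by have := uniq_size_le_card uxbp; rewrite card_ord; move: Hm => /=; lia.
have [leaf | [y yx yN]] := path_end_leaf_or_extends xb bp uxbp; first by exists x, b.
have uyxbp : uniq [:: y, x, b & p] by rewrite /= yN.
apply: (IH y x (b :: p)) => //=; last by rewrite xb.
by have := uniq_size_le_card uyxbp; rewrite card_ord; move: Hm => /=; lia.
Qed.

End Tree.

Section Star.
Variables (n : nat) (e : rel 'I_n) (c : 'I_n).
Hypothesis e_star : forall i j, e i j = (i != j) && ((i == c) || (j == c)).

Lemma star_vdeg_center : vdeg e c = n.-1.
Proof.
rewrite /vdeg; have := cardsC1 c; rewrite card_ord => <-; apply: eq_card => i.
by rewrite !inE e_star eqxx andbT eq_sym.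
Qed.

Lemma star_vdeg_leaf i : i != c -> vdeg e i = 1%N.
Proof.
move=> ic; rewrite /vdeg -(cards1 c); apply: eq_card => j; rewrite !inE e_star (negbTE ic).
by have [->|] := eqVneq j c; rewrite ?andbT ?andbF // eq_sym.
Qed.

End Star.

Local Open Scope ring_scope.

Lemma exists_entry_neq0 (R : nzRingType) n (v : 'rV[R]_n) :
  v != 0 -> exists i, v 0 i != 0.
Proof.
move=> v_neq0; apply/existsP; apply: contraNT v_neq0 => /existsPn v0.
by apply/eqP/rowP => k; rewrite mxE; apply/eqP; rewrite -[_ == _]negbK v0.
Qed.

Section CollatzWielandt.
Variables (R : realFieldType) (n : nat) (M : 'M[R]_n) (y : 'I_n -> R) (b : R).
Hypotheses (M_ge0 : forall i j, 0 <= M i j) (y_gt0 : forall i, 0 < y i).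
Hypothesis yM_le : forall u, \sum_i y i * M i u <= b * y u.

Section Eigenvector.
Variables (lam : R) (v : 'rV[R]_n).
Hypotheses (vM : v *m M = lam *: v) (v_neq0 : v != 0).

Lemma eigenvector_col u : \sum_i v 0 i * M i u = lam * v 0 u.
Proof. by have := congr1 (fun w : 'rV_n => w 0 u) vM; rewrite !mxE. Qed.

Lemma norm_eigenvector_col_le u : `|lam| * `|v 0 u| <= \sum_i `|v 0 i| * M i u.
Proof.
rewrite -normrM -eigenvector_col (le_trans (ler_norm_sum _ _ _)) //.
by apply: ler_sum => i _; rewrite normrM (ger0_norm (M_ge0 i u)).
Qed.

Lemma exists_max_ratio : exists2 z, 0 < z &
  (forall i, `|v 0 i| <= z * y i) /\ exists j, `|v 0 j| = z * y j.
Proof.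
have [i vi] := exists_entry_neq0 v_neq0.
have [j _ max_j] := arg_maxP (fun k => `|v 0 k| / y k) (isT : predT i).
have {}max_j k : `|v 0 k| <= `|v 0 j| / y j * y k.
  by rewrite -ler_pdivrMr //; apply: max_j.
exists (`|v 0 j| / y j); last by split=> //; exists j; rewrite divfK ?gt_eqF.
rewrite -(pmulr_lgt0 _ (y_gt0 i)) (lt_le_trans _ (max_j i)) // normr_gt0 //.
Qed.

Lemma yM_bound_col (z : R) u : (forall i, `|v 0 i| <= z * y i) ->
  \sum_i `|v 0 i| * M i u <= z * \sum_i y i * M i u.
Proof.
move=> vz; rewrite mulr_sumr; apply: ler_sum => i _.
by rewrite mulrA ler_wpM2r.
Qed.

Lemma eigenvalue_norm_le : `|lam| <= b.
Proof.
have [z z_gt0 [vz [j vj]]] := exists_max_ratio.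
rewrite -(ler_pM2r (mulr_gt0 z_gt0 (y_gt0 j))) -vj.
apply: le_trans (norm_eigenvector_col_le j) _; apply: le_trans (yM_bound_col j vz) _.
by rewrite vj mulrCA ler_pM2l.
Qed.

Lemma eigenvalue_eq_max_ratio_closed z u : lam = b -> 0 < z ->
    (forall i, `|v 0 i| <= z * y i) -> `|v 0 u| = z * y u ->
  \sum_i y i * M i u = b * y u /\ forall i, 0 < M i u -> `|v 0 i| = z * y i.
Proof.
move=> lam_b z_gt0 vz vu.
have b_ge0 : 0 <= b := le_trans (normr_ge0 lam) eigenvalue_norm_le.
have lower := norm_eigenvector_col_le u.
rewrite lam_b ger0_norm // vu in lower.
have upper := yM_bound_col u vz; have yMu := yM_le u.
have [vM_eq yM_eq] : \sum_i `|v 0 i| * M i u = z * \sum_i y i * M i u /\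
    \sum_i y i * M i u = b * y u by split; nra.
split=> // i Miu_gt0.
have gap0 : \sum_k (z * y k - `|v 0 k|) * M k u = 0.
  under eq_bigr => k _ do rewrite mulrBl -mulrA.
  by rewrite sumrB -mulr_sumr vM_eq subrr.
have gap_ge0 k : true -> 0 <= (z * y k - `|v 0 k|) * M k u.
  by rewrite mulr_ge0 ?subr_ge0.
move/eqP: (@psumr_eq0P _ _ _ _ gap_ge0 gap0 i isT).
by rewrite mulf_eq0 (gt_eqF Miu_gt0) orbF subr_eq0 => /eqP.
Qed.

End Eigenvector.

Lemma eigenvalue_eq_subinvariant_eq :
    (forall i j, connect (fun u k => 0 < M k u) i j) -> eigenvalue M b ->
  forall u, \sum_i y i * M i u = b * y u.
Proof.
move=> M_conn /eigenvalueP [v vM v_neq0].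
have [z z_gt0 [vz [j vj]]] := exists_max_ratio v_neq0.
have closed := eigenvalue_eq_max_ratio_closed vM v_neq0 (erefl b) z_gt0 vz.
have eq_set u : connect (fun u k => 0 < M k u) j u -> `|v 0 u| = z * y u.
  case/connectP => p + ->; elim: p j vj => //= k p IH x vx /andP [xk kp].
  exact: IH ((closed x vx).2 k xk) kp.
by move=> u; have [] := closed u (eq_set u (M_conn j u)).
Qed.

End CollatzWielandt.

Section AAlpha.
Variables (R : fieldType) (n : nat) (e : rel 'I_n) (alpha : R).
Hypothesis e_sym : symmetric e.
Local Notation M := (A_alpha e alpha).
Local Notation d i := (vdeg e i)%:R.

Lemma A_alpha_col (w : 'I_n -> R) j :
  \sum_i w i * M i j = alpha * d j * w j + (1 - alpha) * \sum_(i | e j i) w i.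
Proof.
under eq_bigr => i _ do rewrite !mxE mulrDr.
rewrite big_split /= (bigD1 j) //= big1 => [|i /negbTE ->]; last by rewrite mul0r !mulr0.
rewrite eqxx mul1r addr0 mulr_sumr (big_mkcond (e j)) /=; congr (_ + _); first by ring.
by apply: eq_bigr => i _; rewrite e_sym; case: (e j i); rewrite ?mulr1 ?mulr0 // mulrC.
Qed.

Lemma A_alpha_eigenvector_col (v : 'rV[R]_n) lam :
    v *m M = lam *: v ->
  forall j, alpha * d j * v 0 j + (1 - alpha) * \sum_(i | e j i) v 0 i = lam * v 0 j.
Proof.
by move=> vM j; rewrite -A_alpha_col; have := congr1 (fun w : 'rV_n => w 0 j) vM; rewrite !mxE.
Qed.

End AAlpha.

Section AAlphaOne.
Variables (R : fieldType) (n : nat) (e : rel 'I_n).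
Hypothesis e_sym : symmetric e.
Local Notation d i := (vdeg e i)%:R.

Lemma A_alpha1_eigenvalue lam : eigenvalue (A_alpha e (1 : R)) lam -> exists i, lam = d i.
Proof.
case/eigenvalueP => v /(A_alpha_eigenvector_col e_sym) vM v_neq0.
have [i vi] := exists_entry_neq0 v_neq0.
exists i; apply: (mulIf vi); rewrite -vM; ring.
Qed.

Lemma A_alpha1_eigenvalue_vdeg c : eigenvalue (A_alpha e (1 : R)) (d c).
Proof.
apply/eigenvalueP; exists (\row_i (i == c)%:R); last first.
  by apply/eqP => /rowP/(_ c); rewrite !mxE eqxx => /eqP; rewrite oner_eq0.
apply/rowP => j; rewrite !mxE (A_alpha_col _ e_sym) subrr mul0r addr0 mul1r !mxE.
by have [->|] := eqVneq j c; rewrite ?mulr1 ?mulr0.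
Qed.

End AAlphaOne.

Section TestVector.
Variables (R : realFieldType) (n : nat) (e : rel 'I_n) (alpha b : R).
Hypotheses (e_irr : irreflexive e) (e_sym : symmetric e).
Hypotheses (e_acyclic : acyclic_graph e) (e_conn : connected_graph e).
Hypothesis n_ge2 : (2 <= n)%N.
Hypotheses (alpha_ge0 : 0 <= alpha) (alpha_lt1 : alpha < 1).
Hypothesis b_root : b ^+ 2 - alpha * n%:R * b + (n%:R - 1) * (2 * alpha - 1) = 0.
Hypothesis b_ge1 : 1 <= b.

Local Notation N := (n%:R : R).
Local Notation M := (A_alpha e alpha).
Local Notation d i := ((vdeg e i)%:R : R).

Lemma natr_pred_n : (n.-1)%:R = N - 1 :> R.
Proof. by rewrite -subn1 natrB //; lia. Qed.

Lemma bound_eq1_of_n2 : n = 2%N -> b = 1.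
Proof.
move=> n2; have root2 : (b - 1) * (b - 2 * alpha + 1) = 0 by rewrite -b_root n2; ring.
by move: alpha_lt1 b_ge1 => ? ?; nra.
Qed.

Let dsum u := \sum_(i | e u i) d i.

(* At [n = 2] the division is by zero, and [b = 1] makes [t * (N - 2) = b - 1]
   hold anyway. *)
Let t := (b - 1) / (N - 2).
Let y i := 1 - alpha - t + t * d i.

Lemma test_slope_mul : t * (N - 2) = b - 1.
Proof.
have [n2|n_neq2] := eqVneq n 2%N; first by rewrite /t (bound_eq1_of_n2 n2) subrr !mul0r.
by rewrite /t divfK // subr_eq0 (eqr_nat R n 2).
Qed.

Lemma test_slope_ge0 : 0 <= t.
Proof. by rewrite /t divr_ge0 // subr_ge0 // (ler_nat R 2). Qed.

(* [b = 1] is a root only when [n = 2], so [t > 0] for [n >= 3]. *)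
Lemma test_slope_gt0 : (3 <= n)%N -> 0 < t.
Proof.
move=> n3; rewrite lt_def test_slope_ge0 andbT; apply/eqP => t0.
have b1 : b = 1.
  by apply/eqP; rewrite -subr_eq0 -test_slope_mul t0 mul0r.
have N3 : 3 <= N by rewrite (ler_nat R 3).
move: b_root alpha_lt1; rewrite b1 => root1 ?; nra.
Qed.

Lemma natr_vdeg_ge1 i : 1 <= d i.
Proof. by rewrite ler1n vdeg_gt0. Qed.

Lemma natr_vdeg_le i : d i <= N - 1.
Proof. by rewrite -natr_pred_n ler_nat vdeg_le_pred. Qed.

Lemma test_vector_gt0 i : 0 < y i.
Proof. by move: (natr_vdeg_ge1 i) test_slope_ge0 alpha_lt1; rewrite /y => ? ? ?; nra. Qed.

Lemma test_vector_sum_neighbours u : \sum_(i | e u i) y i = (1 - alpha - t) * d u + t * dsum u.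
Proof.
rewrite big_split /= -mulr_sumr sumr_const mulr_natr; congr (_ *+ _ + _).
by apply: eq_card => i; rewrite inE.
Qed.

Lemma test_vector_defect u : \sum_i y i * M i u - b * y u =
  (1 - alpha) * t * (dsum u - (N - 1)) + alpha * t * (d u - 1) * (d u - (N - 1)).
Proof.
(* [b] is a root exactly when [(N - 2) * c = 0]; for [n = 2] all degrees are 1. *)
pose c := 1 - alpha - t * (b + 1 - alpha * N).
have c_vdeg : (d u - 1) * c = 0.
  have [n2|n_neq2] := eqVneq n 2%N.
    suff -> : d u = 1 by rewrite subrr mul0r.
    apply/le_anti; rewrite natr_vdeg_ge1 andbT (le_trans (natr_vdeg_le u)) // n2; lra.
  suff -> : c = 0 by rewrite mulr0.
  apply: (mulIf (x := N - 2)); first by rewrite subr_eq0 (eqr_nat R n 2).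
  rewrite mul0r -oppr0 -b_root /c mulrBl mulrAC test_slope_mul; ring.
rewrite (A_alpha_col _ e_sym) test_vector_sum_neighbours /y.
apply/eqP; rewrite -subr_eq0; apply/eqP.
transitivity ((d u - 1) * c + (1 - alpha) * (t * (N - 2) - (b - 1))).
  by rewrite /c; ring.
by rewrite c_vdeg test_slope_mul subrr mulr0 addr0.
Qed.

Lemma dsum_le u : dsum u <= N - 1.
Proof. by rewrite /dsum -natr_sum -natr_pred_n ler_nat sum_vdeg_neighbours_le. Qed.

Lemma defect_terms_le0 u : (1 - alpha) * t * (dsum u - (N - 1)) <= 0 /\
  alpha * t * (d u - 1) * (d u - (N - 1)) <= 0.
Proof.
have alpha_le1 : 0 <= 1 - alpha by rewrite subr_ge0 ltW.
split; (apply: mulr_ge0_le0); rewrite ?subr_le0 ?dsum_le ?natr_vdeg_le //.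
  by rewrite mulr_ge0 ?test_slope_ge0.
by rewrite mulr_ge0 ?(mulr_ge0 alpha_ge0 test_slope_ge0) // subr_ge0 natr_vdeg_ge1.
Qed.

Lemma test_vector_subinvariant u : \sum_i y i * M i u <= b * y u.
Proof.
have [h1 h2] := defect_terms_le0 u.
by rewrite -subr_le0 test_vector_defect; lra.
Qed.

Lemma test_vector_invariant_star : (forall u, \sum_i y i * M i u = b * y u) -> is_star e.
Proof.
move=> yM_eq; have [l [w [lw l_leaf]]] := exists_leaf e_irr e_sym e_acyclic e_conn n_ge2.
apply: (is_star_of_vdeg e_irr e_sym e_acyclic (w := w)).
have [n2|n_neq2] := eqVneq n 2%N.
  by move: (vdeg_le_pred e_irr w) (vdeg_gt0 e_conn n_ge2 w); move: n2; lia.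
have dsum_l : dsum l = d w.
  by rewrite /dsum (big_pred1 w) // => i; apply/idP/eqP => [/l_leaf|->].
have [h1 h2] := defect_terms_le0 l.
have h := test_vector_defect l; rewrite yM_eq subrr in h.
have /eqP : (1 - alpha) * t * (dsum l - (N - 1)) = 0 by lra.
have test_slope_neq0 : t != 0 by rewrite gt_eqF // test_slope_gt0 //; lia.
have alpha_neq1 : 1 - alpha != 0 by rewrite subr_eq0 gt_eqF.
rewrite mulf_eq0 (negbTE (mulf_neq0 alpha_neq1 test_slope_neq0)) subr_eq0 dsum_l.
by rewrite -natr_pred_n eqr_nat => /eqP.
Qed.

Lemma star_dsum c : (forall i j, e i j = (i != j) && ((i == c) || (j == c))) ->
  forall u, dsum u = N - 1.
Proof.
move=> e_star u; rewrite /dsum -natr_pred_n -(star_vdeg_center e_star).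
have [->|uc] := eqVneq u c.
  rewrite (eq_bigr (fun _ => 1)) => [|i]; last first.
    by rewrite e_star eqxx andbT eq_sym => /star_vdeg_leaf ->.
  by rewrite sumr_const; congr (_ *+ _); apply: eq_card => i; rewrite inE.
rewrite (big_pred1 c) // => i; rewrite /= e_star (negbTE uc) /=.
by have [->|] := eqVneq i c; rewrite ?andbT ?andbF // eq_sym.
Qed.

Lemma star_test_vector_invariant : is_star e -> forall u, \sum_i y i * M i u = b * y u.
Proof.
case=> c e_star u; apply/eqP; rewrite -subr_eq0 test_vector_defect (star_dsum e_star).
rewrite subrr mulr0 add0r; have [->|uc] := eqVneq u c.
  by rewrite (star_vdeg_center e_star) natr_pred_n subrr mulr0.
by rewrite (star_vdeg_leaf e_star uc) subrr mulr0 mul0r.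
Qed.

Lemma A_alpha_ge0 i j : 0 <= M i j.
Proof.
have alpha_le1 : 0 <= 1 - alpha by rewrite subr_ge0 ltW.
by rewrite !mxE addr_ge0 // mulr_ge0 // ?mulr_ge0.
Qed.

Lemma A_alpha_edge_gt0 i j : e i j -> 0 < M i j.
Proof.
move=> eij; rewrite !mxE eij (negbTE (edge_neq e_irr eij)) mul0r mulr0 add0r mulr1.
by rewrite subr_gt0.
Qed.

Lemma A_alpha_tree_eigenvalue_le lam : eigenvalue M lam -> lam <= b.
Proof.
case/eigenvalueP => v vM v_neq0; apply: le_trans (ler_norm lam) _.
exact: (eigenvalue_norm_le A_alpha_ge0 test_vector_gt0 test_vector_subinvariant vM v_neq0).
Qed.

Lemma A_alpha_tree_eigenvalue_eq_star : eigenvalue M b -> is_star e.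
Proof.
move=> ev; apply: test_vector_invariant_star.
apply: (eigenvalue_eq_subinvariant_eq A_alpha_ge0 test_vector_gt0
  test_vector_subinvariant _ ev).
move=> i j; apply: connect_sub (e_conn i j) => u k euk.
by apply: connect1; rewrite /= A_alpha_edge_gt0 // e_sym.
Qed.

Lemma star_A_alpha_eigenvalue : is_star e -> eigenvalue M b.
Proof.
move=> e_star; apply/eigenvalueP; exists (\row_i y i); last first.
  apply/eqP => /rowP/(_ (Ordinal (ltnW n_ge2))); rewrite !mxE.
  exact/eqP/lt0r_neq0/test_vector_gt0.
apply/rowP => j; rewrite !mxE -star_test_vector_invariant //.
by apply: eq_bigr => i _; rewrite mxE.
Qed.

End TestVector.

Definition tree_bound (R : rcfType) (n : nat) (alpha : R) : R :=
  (alpha * n%:R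
   + Num.sqrt (alpha ^+ 2 * n%:R ^+ 2 + 4%:R * (n%:R - 1) * (1 - 2%:R * alpha)))
  / 2%:R.

Section TreeBound.
Variables (R : rcfType) (n : nat) (alpha : R).
Hypotheses (n_ge2 : (2 <= n)%N) (alpha_le1 : alpha <= 1).
Local Notation N := (n%:R : R).
Let D := alpha ^+ 2 * N ^+ 2 + 4%:R * (N - 1) * (1 - 2%:R * alpha).
Let s := Num.sqrt D.

Let N_ge2 : 2 <= N.
Proof. by rewrite (ler_nat R 2). Qed.

Let discr_eq : D = (2 - alpha * N) ^+ 2 + 4 * (N - 2) * (1 - alpha).
Proof. by rewrite /D; ring. Qed.

Lemma tree_bound_discr_ge0 : 0 <= D.
Proof. by rewrite discr_eq addr_ge0 ?sqr_ge0 // !mulr_ge0 // subr_ge0 // N_ge2. Qed.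

Let s_sq : s ^+ 2 = D.
Proof. exact: sqr_sqrtr tree_bound_discr_ge0. Qed.

Let twice_tree_bound : tree_bound n alpha * 2 = alpha * N + s.
Proof. by rewrite divfK // pnatr_eq0. Qed.

Lemma tree_bound_root : let b := tree_bound n alpha in
  b ^+ 2 - alpha * N * b + (N - 1) * (2 * alpha - 1) = 0.
Proof.
move=> b; apply: (mulIf (x := 4)); first by rewrite pnatr_eq0.
have -> : (b ^+ 2 - alpha * N * b + (N - 1) * (2 * alpha - 1)) * 4
  = (b * 2) ^+ 2 - 2 * alpha * N * (b * 2) + 4 * (N - 1) * (2 * alpha - 1) by ring.
rewrite twice_tree_bound mul0r -(subrr D) -{1}s_sq /D; ring.
Qed.

Lemma tree_bound_ge1 : 1 <= tree_bound n alpha.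
Proof.
have s_ge : 2 - alpha * N <= s.
  rewrite (le_trans (ler_norm _)) // -sqrtr_sqr ler_wsqrtr // discr_eq lerDl.
  by rewrite !mulr_ge0 // subr_ge0 // N_ge2.
by rewrite -(ler_pM2r (ltr0Sn R 1)) twice_tree_bound mul1r; lra.
Qed.

Lemma tree_bound_alpha1 : alpha = 1 -> tree_bound n alpha = (n.-1)%:R.
Proof.
move=> alpha1; apply: (mulIf (x := 2)); first by rewrite pnatr_eq0.
have N2_ge0 : 0 <= N - 2 by rewrite subr_ge0.
have s_eq : s = N - 2.
  by rewrite /s /D alpha1 -(ger0_norm N2_ge0) -sqrtr_sqr; congr Num.sqrt; ring.
by rewrite twice_tree_bound s_eq alpha1 -subn1 natrB //; [ring | lia].
Qed.

End TreeBound.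

Lemma spectral_radius_le_eq (R : realFieldType) n (M : 'M[R]_n) rho b (P : Prop) :
    is_spectral_radius M rho -> (forall l, eigenvalue M l -> l <= b) ->
    (eigenvalue M b -> P) -> (P -> eigenvalue M b) ->
  rho <= b /\ (rho = b <-> P).
Proof.
move=> [ev_rho rho_max] le_b b_P P_b; have rho_le := le_b _ ev_rho.
split=> //; split=> [rho_b|/P_b/rho_max b_le]; first by apply: b_P; rewrite -rho_b.
by apply/le_anti; rewrite rho_le b_le.
Qed.

Section TreeSpectralRadius.
Variables (R : rcfType) (n : nat) (e : rel 'I_n) (rho : R).
Hypotheses (n_ge2 : (2 <= n)%N) (e_tree : is_tree e).

Lemma A_alpha1_tree_spectral_radius : is_spectral_radius (A_alpha e (1 : R)) rho ->
  rho <= (n.-1)%:R /\ (rho = (n.-1)%:R <-> is_star e).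
Proof.
have [[e_irr e_sym] e_conn e_acyclic] := e_tree.
move/spectral_radius_le_eq; apply.
- by move=> l /(A_alpha1_eigenvalue e_sym) [i ->]; rewrite ler_nat vdeg_le_pred.
- move=> /(A_alpha1_eigenvalue e_sym) [i /eqP]; rewrite eqr_nat eq_sym => /eqP.
  exact: is_star_of_vdeg.
- by case=> c e_star; rewrite -(star_vdeg_center e_star); apply: A_alpha1_eigenvalue_vdeg.
Qed.

Lemma A_alpha_tree_spectral_radius alpha b :
    0 <= alpha -> alpha < 1 ->
    b ^+ 2 - alpha * n%:R * b + (n%:R - 1) * (2 * alpha - 1) = 0 -> 1 <= b ->
    is_spectral_radius (A_alpha e alpha) rho ->
  rho <= b /\ (rho = b <-> is_star e).
Proof.
have [[e_irr e_sym] e_conn e_acyclic] := e_tree.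
move=> alpha_ge0 alpha_lt1 b_root b_ge1 /spectral_radius_le_eq; apply.
- exact: A_alpha_tree_eigenvalue_le.
- exact: A_alpha_tree_eigenvalue_eq_star.
- exact: star_A_alpha_eigenvalue.
Qed.

End TreeSpectralRadius.

Theorem theorem2 (R : rcfType) (n : nat) (alpha : R) (e : rel 'I_n) (rho : R) :
  (2 <= n)%N -> 0 <= alpha <= 1 -> is_tree e ->
  is_spectral_radius (@A_alpha R n e alpha) rho ->
  let b := (alpha * n%:R
            + Num.sqrt (alpha ^+ 2 * n%:R ^+ 2 + 4%:R * (n%:R - 1) * (1 - 2%:R * alpha)))
           / 2%:R in
  rho <= b /\ (rho = b <-> is_star e).
Proof.
move=> n_ge2 /andP [alpha_ge0 alpha_le1] e_tree rho_spec.
change (let b := tree_bound n alpha in rho <= b /\ (rho = b <-> is_star e)) => /=.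
have [alpha1|alpha_neq1] := eqVneq alpha 1.
  rewrite tree_bound_alpha1 //; rewrite alpha1 in rho_spec.
  exact: A_alpha1_tree_spectral_radius.
apply: A_alpha_tree_spectral_radius rho_spec => //.
- by rewrite lt_neqAle alpha_neq1.
- exact: tree_bound_root.
- exact: tree_bound_ge1.
Qed.
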